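(* Let $F:[-1,1]^n\to[-\alpha,\alpha]$ be a multilinear polynomial, with $\alpha>0$, and let $0<\eta\le\frac{1}{\alpha n}$. Let $(x_t)$ be the projected gradient descent sequence $x_{t+1}=\Pi_{[-1,1]^n}(x_t-\eta\nabla F(x_t))$ with $x_0\in[-1,1]^n$. Then for every $t$, $$F(x_{t+1})-F(x_t)\le-\frac{\eta}{2}\|G(x_t)\|_2^2.$$
   Context: $\Pi_{[-1,1]^n}(y)=\arg\min_{x\in[-1,1]^n}\tfrac12\|x-y\|_2^2$ is the Euclidean projection onto the cube. The projected gradient mapping is $G(x)=\frac1\eta\big(x-\Pi_{[-1,1]^n}(x-\eta\nabla F(x))\big)$, so that $x_{t+1}=x_t-\eta G(x_t)$. *)

From HB Require Import structures.
From mathcomp Require Import all_boot all_order all_algebra.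
From mathcomp Require Import all_classical all_reals all_analysis.
Set Implicit Arguments. Unset Strict Implicit. Unset Printing Implicit Defensive.
Import Order.TTheory GRing.Theory Num.Theory.
Import numFieldNormedType.Exports.
Local Open Scope ring_scope.

Section Defs.
Variables (R : realType) (n : nat).

Definition vec := 'I_n -> R.

Definition in_cube (x : vec) : Prop := forall i, -1 <= x i <= 1.

Definition sqnorm (x : vec) : R := \sum_(i < n) x i ^+ 2.

Definition mlpoly (c : {set 'I_n} -> R) (x : vec) : R :=
  \sum_(S : {set 'I_n}) c S * \prod_(i in S) x i.

Definition upd (x : vec) (i : 'I_n) (t : R) : vec :=
  fun j => if j == i then t else x j.

Definition grad (F : vec -> R) (x : vec) : vec :=
  fun i => derive1 (fun t => F (upd x i t)) (x i).

Definition is_cube_proj (P : vec -> vec) : Prop :=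
  forall y, in_cube (P y) /\
    forall z, in_cube z ->
      sqnorm (fun i => P y i - y i) / 2 <= sqnorm (fun i => z i - y i) / 2.

Definition Gmap (P : vec -> vec) (F : vec -> R) (eta : R) (x : vec) : vec :=
  fun i => (x i - P (fun j => x j - eta * grad F x j) i) / eta.

End Defs.

From HB Require Import structures.
From mathcomp Require Import all_boot all_order all_algebra.
From mathcomp Require Import all_classical all_reals all_analysis.
From mathcomp Require Import ring lra.
Import Order.TTheory GRing.Theory Num.Theory.
Local Open Scope ring_scope.

(* F is affine in each coordinate, so its partial derivatives are finite
   differences, and moving coordinate j by d changes the i-th partial derivative
   by at most alpha |d| (the mixed coefficient is controlled by the values of F at
   the corners of the cube).  Walking from x to p one coordinate at a time gives
   F p - F x <= <grad F x, p - x> + alpha n / 2 * |p - x|^2.  The variational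
   inequality of the projection bounds <grad F x, p - x> by -|p - x|^2 / eta, and
   eta alpha n <= 1 leaves -|p - x|^2 / (2 eta) = -(eta / 2) |G x|^2. *)

Lemma derive1_affine (R : realType) (a b x : R) :
  derive1 (fun t : R => a + t * b) x = b.
Proof. by rewrite derive1E deriveD // derive_cst add0r deriveMr // derive_id mulr1. Qed.

Lemma sum_lower_pairs_le {R : realFieldType} {n : nat} (a : 'I_n -> R) :
  2 * \sum_(i < n) a i * \sum_(j < n | (j < i)%N) a j
    <= n%:R * \sum_(i < n) a i ^+ 2.
Proof.
have amgm i j : 2 * (a i * a j) <= a i ^+ 2 + a j ^+ 2.
  by have := sqr_ge0 (a i - a j); rewrite sqrrB; lra.
have swap : \sum_(i < n) \sum_(j < n | (j < i)%N) a j ^+ 2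
    = \sum_(i < n) \sum_(j < n | (i < j)%N) a i ^+ 2.
  by rewrite (exchange_big_dep xpredT).
have row_le (i : 'I_n) :
    \sum_(j < n | (j < i)%N) a i ^+ 2 + \sum_(j < n | (i < j)%N) a i ^+ 2
      <= \sum_(j < n) a i ^+ 2.
  rewrite [X in _ <= X](bigID (fun j : 'I_n => (j < i)%N)) /= lerD2l.
  rewrite [X in _ <= X]big_mkcond [X in X <= _]big_mkcond /=.
  by apply: ler_sum => j _; case: ltngtP; rewrite ?sqr_ge0.
rewrite mulr_sumr.
apply: (le_trans (y := \sum_(i < n) (\sum_(j < n | (j < i)%N) a i ^+ 2
    + \sum_(j < n | (j < i)%N) a j ^+ 2))).
  apply: ler_sum => i _; rewrite !mulr_sumr -big_split /=.
  by apply: ler_sum => j _; exact: amgm.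
rewrite big_split /= swap -big_split /=.
apply: le_trans (ler_sum _ (fun i _ => row_le i)) _.
by rewrite mulr_sumr; apply: ler_sum => i _; rewrite sumr_const card_ord mulr_natl.
Qed.

Lemma interval_min_var (R : realFieldType) (y q : R) :
  -1 <= q <= 1 -> (forall w, -1 <= w <= 1 -> (q - y) ^+ 2 <= (w - y) ^+ 2) ->
  forall z, -1 <= z <= 1 -> (y - q) * (z - q) <= 0.
Proof.
move=> /andP[q_ge q_le] qmin z /andP[z_ge z_le].
have m1 : -1 <= (-1 : R) <= 1 by apply/andP; split; lra.
have p1 : -1 <= (1 : R) <= 1 by apply/andP; split; lra.
case: (ltrP y (-1)) => [y_lt|y_ge].
  have q_sq := qmin _ m1.
  have -> : q = -1 by apply/le_anti; rewrite q_ge andbT; nra.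
  nra.
case: (ltrP 1 y) => [y_gt|y_le].
  have q_sq := qmin _ p1.
  have -> : q = 1 by apply/le_anti; rewrite q_le /=; nra.
  nra.
have := qmin y; rewrite subrr expr0n /= y_ge y_le => /(_ isT) q_sq.
have : (q - y) ^+ 2 == 0 by rewrite eq_le q_sq sqr_ge0.
by rewrite sqrf_eq0 subr_eq0 => /eqP ->; rewrite subrr mul0r.
Qed.

Section Update.
Context {R : realType} {n : nat}.
Implicit Types (y : vec R n) (i j : 'I_n).

Lemma upd_id y i : upd y i (y i) = y.
Proof. by apply: funext => j; rewrite /upd; case: eqP => [->|]. Qed.

Lemma upd_comm y i j a b : i != j ->
  upd (upd y i a) j b = upd (upd y j b) i a.
Proof.
move=> ij; apply: funext => k; rewrite /upd.
by case: (k =P j) => [->|//]; rewrite eq_sym (negPf ij).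
Qed.

Lemma upd_in_cube y i a : in_cube y -> -1 <= a <= 1 -> in_cube (upd y i a).
Proof. by move=> hy ha j; rewrite /upd; case: eqP. Qed.

End Update.

Section CubeProjection.
Context {R : realType} {n : nat} {P : vec R n -> vec R n}.
Hypothesis P_proj : is_cube_proj P.

Lemma cube_proj_coord_min y i w :
  -1 <= w <= 1 -> (P y i - y i) ^+ 2 <= (w - y i) ^+ 2.
Proof.
move=> hw; have [Py_cube Py_min] := P_proj y.
have := Py_min _ (upd_in_cube _ i _ Py_cube hw).
rewrite /sqnorm (bigD1 i) //= [X in _ <= X / 2](bigD1 i) //= /upd eqxx.
under [X in _ <= (_ + X) / 2]eq_bigr => j /negPf -> do [].
lra.
Qed.

Lemma cube_proj_var y i z :
  -1 <= z <= 1 -> (y i - P y i) * (z - P y i) <= 0.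
Proof. by apply: interval_min_var; [exact: (P_proj y).1 | exact: cube_proj_coord_min]. Qed.

Lemma cube_proj_step_le {x g p : vec R n} {eta : R} :
  in_cube x -> 0 < eta -> p = P (fun i => x i - eta * g i) ->
  \sum_(i < n) (p i - x i) * g i <= - sqnorm (fun i => p i - x i) / eta.
Proof.
move=> hx eta_gt0 ->; rewrite /sqnorm -sumrN mulr_suml.
apply: ler_sum => i _; rewrite ler_pdivlMr //.
have := cube_proj_var (fun i => x i - eta * g i) i (x i) (hx i).
nra.
Qed.

End CubeProjection.

Section Multilinear.
Context {R : realType} {n : nat} (c : {set 'I_n} -> R).
Local Notation F := (mlpoly c).
Implicit Types (y : vec R n) (i j : 'I_n).

Definition coord_slope y i : R := F (upd y i 1) - F (upd y i 0).

Lemma mlpoly_upd_affine y i u :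
  F (upd y i u) = F (upd y i 0) + u * coord_slope y i.
Proof.
have [A [B AB]] : exists A B, forall u, F (upd y i u) = A + u * B.
  exists (\sum_S c S * (if i \in S then 0 else \prod_(j in S) y j)).
  exists (\sum_S c S * (if i \in S then \prod_(j in S | j != i) y j else 0)).
  move=> t; rewrite /mlpoly mulr_sumr -big_split /=; apply: eq_bigr => S _.
  case: (boolP (i \in S)) => iS.
  - rewrite (bigD1 i) //= /upd eqxx mulr0 add0r mulrCA.
    by under eq_bigr => j /andP[_ /negPf ->] do [].
  - rewrite mulr0 mulr0 addr0; congr (_ * _); apply: eq_bigr => j jS.
    by rewrite /upd; case: eqP => // ji; rewrite -ji jS in iS.
by rewrite /coord_slope !AB; ring.
Qed.

Lemma mlpoly_upd_sub y i u v :
  F (upd y i u) - F (upd y i v) = (u - v) * coord_slope y i.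
Proof. by rewrite (mlpoly_upd_affine y i u) (mlpoly_upd_affine y i v); ring. Qed.

Lemma grad_mlpoly y i : grad F y i = coord_slope y i.
Proof.
rewrite /grad.
have -> : (fun t => F (upd y i t)) = fun t => F (upd y i 0) + t * coord_slope y i.
  by apply: funext => t; apply: mlpoly_upd_affine.
exact: derive1_affine.
Qed.

Context {alpha : R}.
Hypothesis F_bounded : forall y, in_cube y -> `|F y| <= alpha.

(* The mixed coefficient of F in coordinates (i, j) is a quarter of the
   alternating sum of F over the four corners, hence bounded by alpha. *)
Lemma coord_slope_upd_lipschitz y i j u v : in_cube y -> i != j ->
  `|coord_slope (upd y j u) i - coord_slope (upd y j v) i| <= alpha * `|u - v|.
Proof.
move=> y_cube ij; have ji : j != i by rewrite eq_sym.
pose f a b := F (upd (upd y i a) j b).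
have slope_f w : coord_slope (upd y j w) i = f 1 w - f 0 w.
  by rewrite /coord_slope /f !(upd_comm _ _ _ _ _ ji).
have affine_j a b : f a b = f a 0 + b * (f a 1 - f a 0).
  by rewrite /f mlpoly_upd_affine.
have affine_i a b : f a b = f 0 b + a * (f 1 b - f 0 b).
  by rewrite /f -!(upd_comm _ _ _ _ _ ji) mlpoly_upd_affine.
set q := f 1 1 - f 1 0 - f 0 1 + f 0 0.
have bilinear a b :
    f a b = f 0 0 + a * (f 1 0 - f 0 0) + b * (f 0 1 - f 0 0) + a * b * q.
  by rewrite (affine_j a b) (affine_i a 0) (affine_i a 1) /q; ring.
have corner a b : -1 <= a <= 1 -> -1 <= b <= 1 -> `|f a b| <= alpha.
  by move=> ha hb; apply/F_bounded/upd_in_cube/hb/upd_in_cube.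
have unit_in : -1 <= (1 : R) <= 1 by apply/andP; split; lra.
have munit_in : -1 <= (-1 : R) <= 1 by apply/andP; split; lra.
have q_le : `|q| <= alpha.
  move: (corner _ _ unit_in unit_in) (corner _ _ unit_in munit_in).
  move: (corner _ _ munit_in unit_in) (corner _ _ munit_in munit_in).
  rewrite (bilinear 1 1) (bilinear 1 (-1)) (bilinear (-1) 1) (bilinear (-1) (-1)).
  rewrite !ler_norml.
  move=> /andP[? ?] /andP[? ?] /andP[? ?] /andP[? ?]; apply/andP; split; lra.
rewrite !slope_f (affine_j 1 u) (affine_j 0 u) (affine_j 1 v) (affine_j 0 v).
rewrite (_ : _ - _ = (u - v) * q); last by rewrite /q; ring.
by rewrite normrM mulrC ler_wpM2r.
Qed.

Context {x p : vec R n}.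
Hypotheses (x_cube : in_cube x) (p_cube : in_cube p).

Definition splice (k : nat) : vec R n := fun j => if (j < k)%N then p j else x j.

Lemma splice0 : splice 0 = x.
Proof. by apply: funext => j; rewrite /splice ltn0. Qed.

Lemma splice_ord_max : splice n = p.
Proof. by apply: funext => j; rewrite /splice ltn_ord. Qed.

Lemma splice_in_cube k : in_cube (splice k).
Proof. by move=> j; rewrite /splice; case: ifP. Qed.

Lemma splice_upd_self i : upd (splice i) i (x i) = splice i.
Proof. by rewrite [x i](_ : _ = splice i i) ?upd_id // /splice ltnn. Qed.

Lemma spliceS i : splice i.+1 = upd (splice i) i (p i).
Proof.
apply: funext => j; rewrite /splice /upd ltnS leq_eqVlt -val_eqE /=.
by case: eqP => [/val_inj ->|].
Qed.

Lemma mlpoly_splice_telescope :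
  F p - F x = \sum_(i < n) (p i - x i) * coord_slope (splice i) i.
Proof.
rewrite -{1}splice_ord_max -{2}splice0.
rewrite -(telescope_sumr (fun k => F (splice k)) (leq0n n)) big_mkord.
by apply: eq_bigr => i _; rewrite spliceS -{2}splice_upd_self mlpoly_upd_sub.
Qed.

Lemma coord_slope_splice_drift k i : (k <= i)%N ->
  `|coord_slope (splice k) i - coord_slope x i|
    <= alpha * \sum_(j < n | (j < k)%N) `|p j - x j|.
Proof.
elim: k => [|k IH] ki.
  by rewrite splice0 subrr normr0 big_pred0 ?mulr0.
have kn : (k < n)%N := ltn_trans ki (ltn_ord i).
pose j := Ordinal kn.
have ij : i != j by rewrite -val_eqE /= gtn_eqF.
rewrite (bigD1 j) //= mulrDr.
rewrite (eq_bigl (fun l : 'I_n => (l < k)%N)); last first.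
  by move=> l; rewrite ltnS leq_eqVlt -val_eqE /=; case: ltngtP.
apply: (le_trans (ler_distD (coord_slope (splice k) i) _ _)).
apply: lerD; last exact/IH/ltnW.
rewrite (spliceS j) -{2}(splice_upd_self j).
exact: coord_slope_upd_lipschitz (splice_in_cube _) ij.
Qed.

Lemma mlpoly_descent_bound :
  F p - F x <= \sum_(i < n) (p i - x i) * grad F x i
               + alpha * n%:R / 2 * sqnorm (fun i => p i - x i).
Proof.
have alpha_ge0 : 0 <= alpha := le_trans (normr_ge0 _) (F_bounded _ x_cube).
rewrite mlpoly_splice_telescope.
apply: (le_trans (y := \sum_(i < n) ((p i - x i) * grad F x i
    + alpha * (`|p i - x i| * \sum_(j < n | (j < i)%N) `|p j - x j|)))).
  apply: ler_sum => i _; rewrite grad_mlpoly.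
  rewrite -[X in X <= _](subrK ((p i - x i) * coord_slope x i)) addrC lerD2l.
  rewrite -mulrBr mulrCA; apply: le_trans (ler_norm _) _.
  by rewrite normrM ler_wpM2l // coord_slope_splice_drift.
rewrite big_split /= lerD2l -mulr_sumr -!mulrA ler_wpM2l //.
have pairs := sum_lower_pairs_le (fun i => `|p i - x i|).
have sq_norm : \sum_(i < n) `|p i - x i| ^+ 2 = sqnorm (fun i => p i - x i).
  by apply: eq_bigr => i _; exact: real_normK (num_real _).
rewrite /= sq_norm in pairs; lra.
Qed.

End Multilinear.

Theorem lemma9 (R : realType) (n : nat) (c : {set 'I_n} -> R) (alpha eta : R)
  (P : vec R n -> vec R n) (x : nat -> vec R n) :
  0 < alpha ->
  (forall y, in_cube y -> `|mlpoly c y| <= alpha) ->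
  0 < eta -> eta <= 1 / (alpha * n%:R) ->
  is_cube_proj P ->
  in_cube (x 0%N) ->
  (forall t, x t.+1 = P (fun i => x t i - eta * grad (mlpoly c) (x t) i)) ->
  forall t, mlpoly c (x t.+1) - mlpoly c (x t)
            <= - (eta / 2) * sqnorm (Gmap P (mlpoly c) eta (x t)).
Proof.
move=> alpha_gt0 F_bounded eta_gt0 eta_le P_proj x0_cube x_succ t.
have x_cube k : in_cube (x k).
  by elim: k => // k _; rewrite x_succ; exact: (P_proj _).1.
have rate : alpha * n%:R <= eta^-1.
  have [->|n_gt0] := posnP n; first by rewrite mulr0 invr_ge0 ltW.
  by rewrite -[alpha * _]invrK lef_pV2 ?posrE ?invr_gt0 ?mulr_gt0 ?ltr0n // -div1r.
set D := sqnorm (fun i => x t.+1 i - x t i).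
have D_ge0 : 0 <= D by apply: sumr_ge0 => i _; exact: sqr_ge0.
have G_sqnorm : sqnorm (Gmap P (mlpoly c) eta (x t)) = D / eta ^+ 2.
  rewrite /D /sqnorm mulr_suml; apply: eq_bigr => i _.
  by rewrite /Gmap -x_succ; field; exact: lt0r_neq0.
have descent := mlpoly_descent_bound c F_bounded (x_cube t) (x_cube t.+1).
have step := cube_proj_step_le P_proj (x_cube t) eta_gt0 (x_succ t).
have rate_D := ler_wpM2r D_ge0 rate.
rewrite -/D in descent step.
rewrite G_sqnorm (_ : - (eta / 2) * (D / eta ^+ 2) = - (D / eta) / 2); last first.
  by field; exact: lt0r_neq0.
lra.
Qed.
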